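(* Let $G=(V,E,w)$ be any weighted undirected graph, $\beta\in(0,1)$, and $\mathcal T$ a $\beta$-balanced HC-tree of $G$. Define $$W(G):=\sum_{\substack{\text{internal nodes } u \text{ of } \mathcal T\\ (A,B):=\mathrm{cut}(\mathcal T[u])}}\frac12\big(w(A,\bar A)+w(B,\bar B)\big)\cdot|A\cup B|.$$ Then $C_G(\mathcal T)\le W(G)\le \frac1\beta\, C_G(\mathcal T)$.
   Context: Let $G=(V,E,w)$ be an undirected graph with nonnegative edge weights $w$. A hierarchical clustering tree (HC-tree) of $G$ is a rooted tree $\mathcal T$ whose leaves are in bijection with $V$. For a node $z$, $\mathcal T[z]$ is the subtree rooted at $z$ and $\mathrm{leaves}(\mathcal T[z])\subseteq V$ its set of leaves. For $u,v\in V$, $u\vee v$ denotes their lowest common ancestor in $\mathcal T$. The cost of $\mathcal T$ on $G$ is $C_G(\mathcal T)=\sum_{(u,v)\in E} w(u,v)\,|\mathrm{leaves}(\mathcal T[u\vee v])|$. For disjoint $A,B\subseteq V$, $w(A,B)$ denotes the total weight of edges with one endpoint in $A$ and the other in $B$, and $\bar A=V\setminus A$. If $\mathcal T$ is binary and $z$ is an internal node with children $z_1,z_2$, where $|\mathrm{leaves}(\mathcal T[z_1])|\le|\mathrm{leaves}(\mathcal T[z_2])|$, then $\mathrm{cut}(\mathcal T[z]):=(A,B)$ with $A=\mathrm{leaves}(\mathcal T[z_1])$, $B=\mathrm{leaves}(\mathcal T[z_2])$. For $0<\beta<1$, a pair of disjoint sets $(A,B)$ is $\beta$-balanced if $\max\{|A|,|B|\}\le(1-\beta)|A\cup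 B|$; a binary HC-tree is $\beta$-balanced if $\mathrm{cut}(\mathcal T[z])$ is $\beta$-balanced for every internal node $z$. *)

From HB Require Import structures.
From mathcomp Require Import all_boot all_order all_algebra.
Set Implicit Arguments. Unset Strict Implicit. Unset Printing Implicit Defensive.
Import Order.TTheory GRing.Theory Num.Theory.
Local Open Scope ring_scope.

Inductive btree (V : Type) : Type :=
  | Leaf of V
  | Node of btree V & btree V.
Arguments Leaf {V}.
Arguments Node {V}.

Section HC.
Variable V : finType.

Fixpoint leaves (t : btree V) : seq V :=
  match t with Leaf v => [:: v] | Node l r => leaves l ++ leaves r end.

Definition leafset (t : btree V) : {set V} := [set x in leaves t].

Definition is_HC_tree (t : btree V) : Prop :=
  uniq (leaves t) /\ forall v : V, v \in leaves t.

(* The subtree T[u \/ v] rooted at the lowest common ancestor of u and v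
   (for u, v leaves of t). *)
Fixpoint lca (t : btree V) (u v : V) : btree V :=
  match t with
  | Leaf _ => t
  | Node l r =>
      if (u \in leaves l) && (v \in leaves l) then lca l u v
      else if (u \in leaves r) && (v \in leaves r) then lca r u v
      else t
  end.

Variable R : realFieldType.

Definition wcut (w : V -> V -> R) (A B : {set V}) : R :=
  \sum_(a in A) \sum_(b in B) w a b.

(* Weighted undirected (loopless) graph given by a symmetric nonnegative
   weight function; weight 0 means "no edge". *)
Definition weighted_graph (w : V -> V -> R) : Prop :=
  (forall x y, w x y = w y x) /\ (forall x y, 0 <= w x y) /\ (forall x, w x x = 0).

(* C_G(T) = sum over undirected edges {u,v} of w(u,v) |leaves(T[u \/ v])|;
   each unordered edge appears twice among ordered pairs, hence the 1/2. *)
Definition hc_cost (w : V -> V -> R) (t : btree V) : R :=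
  2^-1 * \sum_(u : V) \sum_(v : V) w u v * #|leafset (lca t u v)|%:R.

Definition cut (l r : btree V) : {set V} * {set V} :=
  if (#|leafset l| <= #|leafset r|)%N then (leafset l, leafset r)
  else (leafset r, leafset l).

Definition balanced_pair (beta : R) (A B : {set V}) : bool :=
  (maxn #|A| #|B|)%:R <= (1 - beta) * #|A :|: B|%:R.

Fixpoint beta_balanced (beta : R) (t : btree V) : bool :=
  match t with
  | Leaf _ => true
  | Node l r => [&& balanced_pair beta (cut l r).1 (cut l r).2,
                  beta_balanced beta l & beta_balanced beta r]
  end.

Fixpoint Wsum (w : V -> V -> R) (t : btree V) : R :=
  match t with
  | Leaf _ => 0
  | Node l r =>
      let A := (cut l r).1 in let B := (cut l r).2 in
      2^-1 * (wcut w A (~: A) + wcut w B (~: B)) * #|A :|: B|%:R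
      + Wsum w l + Wsum w r
  end.

End HC.

From HB Require Import structures.
From mathcomp Require Import all_boot all_order all_algebra.
From mathcomp Require Import ring lra.
Set Implicit Arguments. Unset Strict Implicit.
Import Order.TTheory GRing.Theory Num.Theory.
Local Open Scope ring_scope.

(* Both sides are weighted sums over (ordered) pairs of vertices: the edge
   u v contributes |T[u \/ v]| to 2 C_G(T), and to 2 W(G) it contributes the
   sizes of all internal nodes having a child that contains u but not v, i.e.
   of the lowest common ancestor and of every node strictly between it and u.
   The lca term alone gives C_G(T) <= W(G).  Going down from the lca, each
   child is at most a (1 - beta) fraction of its parent, so the sizes form a
   geometric series bounded by |T[u \/ v]| / beta. *)

Lemma uniq_cat_memNr (T : eqType) (s1 s2 : seq T) (x : T) :
  uniq (s1 ++ s2) -> x \in s1 -> x \notin s2.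
Proof.
by rewrite cat_uniq => /and3P[_ /hasPn disj _] x1; apply/negP => /disj; rewrite x1.
Qed.

Lemma uniq_cat_memNl (T : eqType) (s1 s2 : seq T) (x : T) :
  uniq (s1 ++ s2) -> x \in s2 -> x \notin s1.
Proof. by move=> u12 x2; apply: contraL x2; apply: uniq_cat_memNr. Qed.

Lemma geometric_tail_le (R : realFieldType) (beta S x : R) : 0 < beta ->
  x <= (1 - beta) * S -> S + beta^-1 * x <= beta^-1 * S.
Proof.
move=> beta_gt0 le_x.
have : beta^-1 * x <= beta^-1 * ((1 - beta) * S).
  by rewrite ler_wpM2l // invr_ge0 ltW.
have -> : beta^-1 * ((1 - beta) * S) = beta^-1 * S - S.
  by field; rewrite gt_eqF.
lra.
Qed.

Section SeparationSum.
Variables (V : finType) (R : realFieldType).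
Implicit Types (t l r : btree V) (u v : V).

Lemma in_leafset t x : (x \in leafset t) = (x \in leaves t).
Proof. by rewrite inE. Qed.

Lemma leafset_Node l r : leafset (Node l r) = leafset l :|: leafset r.
Proof. by apply/setP => x; rewrite !inE mem_cat. Qed.

Lemma balanced_cut_card (beta : R) l r :
  balanced_pair beta (cut l r).1 (cut l r).2 ->
  #|leafset l|%:R <= (1 - beta) * #|leafset (Node l r)|%:R /\
  #|leafset r|%:R <= (1 - beta) * #|leafset (Node l r)|%:R.
Proof.
rewrite /balanced_pair leafset_Node /cut.
case: ifP => _ /= bal; [|rewrite setUC in bal];
  by split; apply: le_trans bal; rewrite ler_nat ?leq_maxl ?leq_maxr.
Qed.

Fixpoint sep_sum t u v : R :=
  match t with
  | Leaf _ => 0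
  | Node l r => #|leafset (Node l r)|%:R *
      (((u \in leaves l) && (v \notin leaves l))%:R
       + ((u \in leaves r) && (v \notin leaves r))%:R)
      + sep_sum l u v + sep_sum r u v
  end.

Lemma sep_sum_ge0 t u v : 0 <= sep_sum t u v.
Proof. by elim: t => [x|l IHl r IHr] //=; rewrite !addr_ge0 // mulr_ge0 // addr_ge0. Qed.

Lemma sep_sum_notin t u v : u \notin leaves t -> sep_sum t u v = 0.
Proof.
elim: t => [x|l IHl r IHr] //=; rewrite mem_cat negb_or => /andP[ul ur].
by rewrite IHl // IHr // (negbTE ul) (negbTE ur) /= !addr0 mulr0.
Qed.

Lemma sep_sum_Node_in_l l r u v :
  uniq (leaves (Node l r)) -> u \in leaves l ->
  sep_sum (Node l r) u v
    = #|leafset (Node l r)|%:R * (v \notin leaves l)%:R + sep_sum l u v.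
Proof.
move=> uq ul; have ur : u \notin leaves r := uniq_cat_memNr uq ul.
by rewrite /= ul (negbTE ur) (sep_sum_notin v ur) !addr0.
Qed.

Lemma sep_sum_Node_in_r l r u v :
  uniq (leaves (Node l r)) -> u \in leaves r ->
  sep_sum (Node l r) u v
    = #|leafset (Node l r)|%:R * (v \notin leaves r)%:R + sep_sum r u v.
Proof.
move=> uq ur; have ul : u \notin leaves l := uniq_cat_memNl uq ur.
by rewrite /= ur (negbTE ul) (sep_sum_notin v ul) add0r addr0.
Qed.

Variables (beta : R) (beta_gt0 : 0 < beta).

Lemma sep_sum_out_le t u v :
  uniq (leaves t) -> beta_balanced beta t ->
  u \in leaves t -> v \notin leaves t ->
  sep_sum t u v <= beta^-1 * #|leafset t|%:R.
Proof.
elim: t => [x|l IHl r IHr] uq.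
  by move=> *; rewrite mulr_ge0 // invr_ge0 ltW.
have [ul ur] : uniq (leaves l) /\ uniq (leaves r).
  by move: uq; rewrite cat_uniq => /and3P[-> _ ->].
move=> /and3P[bal bl br]; have [cl cr] := balanced_cut_card bal.
rewrite !mem_cat negb_or => uin /andP[vl vr].
case/orP: uin => [u_l | u_r].
  rewrite sep_sum_Node_in_l // vl mulr1; apply: le_trans (geometric_tail_le beta_gt0 cl).
  by rewrite lerD2l; apply: IHl.
rewrite sep_sum_Node_in_r // vr mulr1; apply: le_trans (geometric_tail_le beta_gt0 cr).
by rewrite lerD2l; apply: IHr.
Qed.

Lemma sep_sum_lca_bounds t u v :
  uniq (leaves t) -> beta_balanced beta t ->
  u \in leaves t -> v \in leaves t -> u != v ->
  #|leafset (lca t u v)|%:R <= sep_sum t u v <= beta^-1 * #|leafset (lca t u v)|%:R.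
Proof.
elim: t => [x|l IHl r IHr] uq.
  by move=> _; rewrite !inE => /eqP -> /eqP ->; rewrite eqxx.
have [ul ur] : uniq (leaves l) /\ uniq (leaves r).
  by move: uq; rewrite cat_uniq => /and3P[-> _ ->].
move=> /and3P[bal bl br]; have [cl cr] := balanced_cut_card bal.
rewrite /= !mem_cat => uin vin uv.
case: ifP => [/andP[u_l v_l] | not_l].
  by rewrite -/(sep_sum (Node l r) u v) sep_sum_Node_in_l // v_l mulr0 add0r; apply: IHl.
case: ifP => [/andP[u_r v_r] | not_r].
  by rewrite -/(sep_sum (Node l r) u v) sep_sum_Node_in_r // v_r mulr0 add0r; apply: IHr.
rewrite -/(sep_sum (Node l r) u v).
case/orP: uin => [u_l | u_r].
  have v_l : v \notin leaves l by apply: contraFN not_l; rewrite u_l.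
  rewrite sep_sum_Node_in_l // v_l mulr1 lerDl sep_sum_ge0 /=.
  by apply: le_trans (geometric_tail_le beta_gt0 cl); rewrite lerD2l sep_sum_out_le.
have v_r : v \notin leaves r by apply: contraFN not_r; rewrite u_r.
rewrite sep_sum_Node_in_r // v_r mulr1 lerDl sep_sum_ge0 /=.
by apply: le_trans (geometric_tail_le beta_gt0 cr); rewrite lerD2l sep_sum_out_le.
Qed.

End SeparationSum.

Section CutWeights.
Variables (V : finType) (R : realFieldType) (w : V -> V -> R).

Lemma wcut_setC (X : {set V}) :
  wcut w X (~: X) = \sum_u \sum_v w u v * ((u \in X) && (v \notin X))%:R.
Proof.
rewrite /wcut big_mkcond; apply: eq_bigr => u _; case: (u \in X) => /=.
  rewrite big_mkcond; apply: eq_bigr => v _.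
  by rewrite inE; case: (v \in X); rewrite ?mulr1 ?mulr0.
by rewrite big1 // => v _; rewrite mulr0.
Qed.

Lemma Wsum_sep_sum t :
  Wsum w t = 2^-1 * \sum_u \sum_v w u v * sep_sum R t u v.
Proof.
elim: t => [x|l IHl r IHr] /=.
  by rewrite big1 ?mulr0 // => u _; rewrite big1 // => v _; rewrite mulr0.
have -> : 2^-1 * (wcut w (cut l r).1 (~: (cut l r).1) + wcut w (cut l r).2 (~: (cut l r).2))
    * #|(cut l r).1 :|: (cut l r).2|%:R
    = 2^-1 * (wcut w (leafset l) (~: leafset l) + wcut w (leafset r) (~: leafset r))
      * #|leafset (Node l r)|%:R.
  by rewrite leafset_Node /cut; case: ifP => //= _; rewrite setUC addrC.
rewrite IHl IHr !wcut_setC -mulrA -!mulrDr; congr (_ * _).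
rewrite mulrC mulrDr !mulr_sumr -!big_split /=; apply: eq_bigr => u _.
rewrite !mulr_sumr -!big_split /=; apply: eq_bigr => v _.
rewrite !in_leafset; ring.
Qed.

End CutWeights.

Theorem lemma3p2 (R : realFieldType) (V : finType) (w : V -> V -> R)
    (beta : R) (T : btree V) :
  weighted_graph w -> 0 < beta < 1 ->
  is_HC_tree T -> beta_balanced beta T ->
  hc_cost w T <= Wsum w T /\ Wsum w T <= beta^-1 * hc_cost w T.
Proof.
move=> [_ [w_ge0 w_diag]] /andP[beta_gt0 _] [uq all_in] bal.
have pair_bounds u v : w u v * #|leafset (lca T u v)|%:R <= w u v * sep_sum R T u v
    <= beta^-1 * (w u v * #|leafset (lca T u v)|%:R).
  have [<-|uv] := eqVneq u v; first by rewrite w_diag !mul0r mulr0 lexx.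
  have /andP[lb ub] := sep_sum_lca_bounds beta_gt0 uq bal (all_in u) (all_in v) uv.
  by rewrite ler_wpM2l //= mulrCA ler_wpM2l.
have half_ge0 : (0 : R) <= 2^-1 by rewrite invr_ge0 ler0n.
rewrite Wsum_sep_sum /hc_cost mulrCA; split; rewrite ler_wpM2l // ?mulr_sumr;
  apply: ler_sum => u _; rewrite ?mulr_sumr; apply: ler_sum => v _;
  by case/andP: (pair_bounds u v).
Qed.
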